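(* Let $(X,\mathcal{A})$ be a measurable space, $f,g\in\mathcal{F}^{(X,\mathcal{A})}$ comonotone, $\otimes:[0,\infty]^2\to[0,\infty]$ a pseudo-multiplication with neutral element $e\in(0,\infty]$, and $m\in\mathcal{M}^{(X,\mathcal{A})}$ a monotone measure with $a\otimes m(X)\le a$ for all $a\in[0,\infty]$. Let $U_0,U_1,U_2:[0,\infty)\to[0,\infty)$ be continuous strictly increasing with $\mathbf{I}_\otimes(m,U_1(f))<\infty$ and $\mathbf{I}_\otimes(m,U_2(g))<\infty$. Let $\star:[0,\infty)^2\to[0,\infty)$ be continuous and non-decreasing in both arguments and $\psi:[0,\infty)\to[0,\infty)$ continuous and strictly increasing. If for all $a,b\in[0,\infty)$, $c\in[0,\infty]$, \[ U_0^{-1}\big[U_0(\psi(a)\star\psi(b))\otimes c\big]\ \ge\ \big[\psi\big(U_1^{-1}[U_1(a)\otimes c]\big)\star\psi(b)\big]\vee\big[\psi(a)\star\psi\big(U_2^{-1}[U_2(b)\otimes c]\big)\big], \] then \[ U_0^{-1}\big[\mathbf{I}_\otimes\big(m,U_0[\psi(f)\star\psi(g)]\big)\big]\ \ge\ \psi\big(U_1^{-1}(\mathbf{I}_\otimes(m,U_1(f)))\big)\star\psi\big(U_2^{-1}(\mathbf{I}_\otimes(m,U_2(g)))\big). \]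
   Context: A monotone measure on $(X,\mathcal{A})$ is $m:\mathcal{A}\to[0,\infty]$ with $m(\emptyset)=0$, $m(X)>0$, $m(A)\le m(B)$ for $A\subseteq B$; $\mathcal{M}^{(X,\mathcal{A})}$ is the set of these; $\mathcal{F}^{(X,\mathcal{A})}$ the set of $\mathcal{A}$-measurable $f:X\to[0,\infty]$. A pseudo-multiplication is $\otimes:[0,\infty]^2\to[0,\infty]$, non-decreasing in each component, with annihilator $0$ and a neutral element $e\in(0,\infty]$. $\mathbf{I}_\otimes(m,f)=\sup\{t\otimes m(\{f\ge t\}) : t\in(0,\infty]\}$. $f,g$ are comonotone if $(f(x)-f(y))(g(x)-g(y))\ge0$ for all $x,y$. Operations on functions are pointwise. *)

From HB Require Import structures.
From mathcomp Require Import all_boot all_order all_algebra.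
From mathcomp Require Import all_classical all_reals all_analysis.
Set Implicit Arguments. Unset Strict Implicit. Unset Printing Implicit Defensive.
Import Order.TTheory GRing.Theory Num.Theory.
Import numFieldNormedType.Exports.
Local Open Scope classical_set_scope.
Local Open Scope ring_scope.
Local Open Scope ereal_scope.

Definition is_pseudo_mult {R : realType} (pm : \bar R -> \bar R -> \bar R)
    (e : \bar R) : Prop :=
  [/\ (forall a b, 0 <= a -> 0 <= b -> 0 <= pm a b),
      (forall a a' b b', 0 <= a -> a <= a' -> 0 <= b -> b <= b' ->
          pm a b <= pm a' b'),
      (forall a, 0 <= a -> pm 0 a = 0 /\ pm a 0 = 0),
      0 < e &
      (forall a, 0 <= a -> pm e a = a /\ pm a e = a)].

Definition is_monotone_measure {d} {T : measurableType d} {R : realType}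
    (m : set T -> \bar R) : Prop :=
  [/\ m set0 = 0, 0 < m setT,
      (forall A, measurable A -> 0 <= m A) &
      (forall A B, measurable A -> measurable B -> A `<=` B -> m A <= m B)].

Definition Iint {d} {T : measurableType d} {R : realType}
    (pm : \bar R -> \bar R -> \bar R) (m : set T -> \bar R)
    (h : T -> \bar R) : \bar R :=
  ereal_sup [set pm t (m [set x | t <= h x]) | t in [set t : \bar R | 0 < t]].

(** Inverse of a (continuous, strictly increasing) U : [0,oo) -> [0,oo),
    extended to [0,oo] as the generalized inverse
    U^{-1}(y) = sup ({0} u {x in [0,oo) | U x <= y}). *)
Definition Uinv {R : realType} (U : R -> R) (y : \bar R) : \bar R :=
  ereal_sup ([set 0] `|`
    [set (x%:E) | x in [set x : R | (0 <= x)%R /\ (U x)%:E <= y]]).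

(** Monotone (left-continuous) extension of psi : [0,oo) -> [0,oo) to [0,oo]. *)
Definition psiE {R : realType} (psi : R -> R) (y : \bar R) : \bar R :=
  ereal_sup [set (psi x)%:E | x in [set x : R | (0 <= x)%R /\ x%:E <= y]].

(** Monotone extension of star : [0,oo)^2 -> [0,oo) to [0,oo]^2. *)
Definition starE {R : realType} (star : R -> R -> R) (a b : \bar R) : \bar R :=
  ereal_sup [set (star p.1 p.2)%:E | p in
    [set p : R * R | [/\ (0 <= p.1)%R, (0 <= p.2)%R, p.1%:E <= a & p.2%:E <= b]]].

Definition cont_strict_incr {R : realType} (U : R -> R) : Prop :=
  [/\ (forall x, (0 <= x)%R -> (0 <= U x)%R),
      {within [set x : R | (0 <= x)%R], continuous U} &
      (forall x y, (0 <= x)%R -> (x < y)%R -> (U x < U y)%R)].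

(* Fix levels a, b >= 0. By comonotonicity one of the superlevel sets
   {f >= a}, {g >= b} contains the other; the hypothesis, applied with c the
   measure of the smaller one, bounds ψ(U1^-1[U1 a ⊗ m{f >= a}]) ⋆ ψ b (or its
   mirror image) by U0^-1[U0(ψ a ⋆ ψ b) ⊗ m{f >= a, g >= b}]. This is at most
   U0^-1 of the integral of U0[ψ f ⋆ ψ g], because {f >= a, g >= b} lies in
   its superlevel set at height U0(ψ a ⋆ ψ b). Since U1 is a continuous
   increasing bijection onto its range, the integral of U1 o f is approached by
   the values U1 a ⊗ m{f >= a}, and continuity of ψ and ⋆ carries the bound
   to the limit. *)
From HB Require Import structures.
From mathcomp Require Import all_boot all_order all_algebra.
From mathcomp Require Import all_classical all_reals all_analysis.
From mathcomp Require Import lra.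
Import Order.TTheory GRing.Theory Num.Theory.
Import numFieldNormedType.Exports.
Set Implicit Arguments. Unset Strict Implicit. Unset Printing Implicit Defensive.
Local Open Scope classical_set_scope.
Local Open Scope ring_scope.

Lemma within_continuous_gt {R : realType} {X : pseudoMetricType R}
    (h : X -> R) (A : set X) p w :
  {within A, continuous h} -> A p -> w < h p ->
  exists2 e : R, 0 < e & forall q, A q -> ball p e q -> w < h q.
Proof.
move=> hc Ap wh.
have /((subspace_continuousP _ _).1 hc p Ap) : \forall y \near h p, w < y.
  exact: lt_nbhsr.
rewrite /within /= nbhs_simpl => /nbhs_ballP[e e0 He].
by exists e => // q Aq pq; exact: He.
Qed.

Section ContStrictIncr.
Context {R : realType} (U : R -> R).
Hypothesis hU : cont_strict_incr U.

Lemma csi_ge0 x : 0 <= x -> 0 <= U x.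
Proof. by case: hU => + _ _; apply. Qed.

Let csi_homo : {in [pred x | 0 <= x] &, {homo U : x y / x < y}}.
Proof. by case: hU => _ _ Uinc x y x0 _; exact: Uinc. Qed.

Lemma csi_leE x y : 0 <= x -> 0 <= y -> (U x <= U y) = (x <= y).
Proof. exact: le_mono_in csi_homo x y. Qed.

Lemma csi_ltE x y : 0 <= x -> 0 <= y -> (U x < U y) = (x < y).
Proof. exact: leW_mono_in (le_mono_in csi_homo) x y. Qed.

Lemma csi_gt_left x1 q : 0 < x1 -> q < U x1 ->
  exists x0, [/\ 0 <= x0, x0 < x1 & q < U x0].
Proof.
move=> x1_gt0 qU; have [_ Uc _] := hU.
have [e e_gt0 He] := within_continuous_gt Uc (ltW x1_gt0 : 0 <= x1) qU.
pose r := Num.min x1 e.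
have [r_gt0 r_x1 r_e] : [/\ 0 < r, r <= x1 & r <= e].
  by rewrite lt_min x1_gt0 e_gt0 !ge_min !lexx ?orbT.
exists (x1 - r / 2); split; [lra|lra|].
apply: He; first by rewrite /=; lra.
by rewrite -ball_normE /= opprB addrC subrK ger0_norm; lra.
Qed.

Lemma csi_ivt x r : 0 <= x -> U 0 <= r <= U x -> exists2 a, 0 <= a & U a = r.
Proof.
move=> x0 rI; have [_ Uc _] := hU.
have Ux : U 0 <= U x by rewrite csi_leE.
have [] := @IVT _ U 0 x r x0.
- apply: continuous_subspaceW Uc => y.
  by rewrite /= in_itv /= => /andP[].
- by rewrite (min_l Ux) (max_r Ux).
- by move=> a; rewrite in_itv /= => /andP[a_ge0 _] Ua; exists a.
Qed.

End ContStrictIncr.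

Section ExtendedOperators.
Context {R : realType}.
Local Open Scope ereal_scope.
Implicit Types (U psi : R -> R) (star : R -> R -> R) (x : R) (y : \bar R).

Lemma Uinv_ge0 U y : 0 <= Uinv U y.
Proof. by apply: ereal_sup_ubound; left. Qed.

Lemma Uinv_ub U x y : (0 <= x)%R -> (U x)%:E <= y -> x%:E <= Uinv U y.
Proof. by move=> x0 Uxy; apply: ereal_sup_ubound; right; exists x. Qed.

Lemma le_Uinv U y y' : y <= y' -> Uinv U y <= Uinv U y'.
Proof.
move=> yy'; apply: ereal_sup_le => _ [->|[x [x0 Uxy] <-]]; first by left.
by right; exists x => //; split => //; exact: le_trans Uxy yy'.
Qed.

Lemma lt_Uinv U x y : (0 <= x)%R -> x%:E < Uinv U y ->
  exists2 x', (x < x')%R & (U x')%:E <= y.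
Proof.
move=> x0 /ereal_sup_gt[_ [->|[x' [_ Ux'] <-]] xz].
  by move: xz; rewrite lte_fin ltNge x0.
by exists x' => //; rewrite -lte_fin.
Qed.

Lemma psiE_ub psi x y : (0 <= x)%R -> x%:E <= y -> (psi x)%:E <= psiE psi y.
Proof. by move=> x0 xy; apply: ereal_sup_ubound; exists x. Qed.

Lemma lt_psiE psi p y : p%:E < psiE psi y ->
  exists x, [/\ (0 <= x)%R, x%:E <= y & (p < psi x)%R].
Proof.
move=> /ereal_sup_gt[_ [x [x0 xy] <-] px].
by exists x; split => //; rewrite -lte_fin.
Qed.

Lemma starE_ub star p1 p2 a b : (0 <= p1)%R -> (0 <= p2)%R ->
  p1%:E <= a -> p2%:E <= b -> (star p1 p2)%:E <= starE star a b.
Proof. by move=> *; apply: ereal_sup_ubound; exists (p1, p2). Qed.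

Lemma approx_from_below (c p e : R) (P : \bar R) : (0 <= c)%R -> (0 <= p)%R ->
  p%:E <= P -> (0 < e)%R ->
  exists q, [/\ (0 <= q)%R, (`|p - q| < e)%R & (q <= c)%R \/ q%:E < P].
Proof.
move=> c_ge0 p_ge0 pP e_gt0.
have [p_le|c_lt] := leP p c.
  by exists p; rewrite subrr normr0; split => //; left.
have [q_le|c_ltq] := leP (p - e / 2)%R c.
  by exists c; split; [|rewrite ger0_norm; lra|left].
exists (p - e / 2)%R; split; first lra.
  by rewrite opprB addrC subrK ger0_norm; lra.
by right; apply: lt_le_trans pP; rewrite lte_fin; lra.
Qed.

Lemma starE_le_approx star (A B W : \bar R) (c : R) : (0 <= c)%R ->
  {within [set p : R * R | (0 <= p.1)%R /\ (0 <= p.2)%R],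
     continuous (fun p : R * R => star p.1 p.2)} ->
  (forall q1 q2, (0 <= q1)%R -> (0 <= q2)%R ->
     (q1 <= c)%R \/ q1%:E < A -> (q2 <= c)%R \/ q2%:E < B ->
     (star q1 q2)%:E <= W) ->
  starE star A B <= W.
Proof.
move=> c_ge0 star_cont Hq.
apply: ub_ereal_sup => _ [[p1 p2] [/= p1_ge0 p2_ge0 p1A p2B] <-] /=.
case: W Hq => [w| |] Hq; last 2 first.
- by rewrite leey.
- by move: (Hq _ _ c_ge0 c_ge0 (or_introl (lexx c)) (or_introl (lexx c)));
    rewrite leeNy_eq.
rewrite lee_fin leNgt; apply/negP => w_lt.
have p_in : [set p : R * R | (0 <= p.1)%R /\ (0 <= p.2)%R] (p1, p2) by [].
have [ep ep_gt0 Hep] := within_continuous_gt star_cont p_in w_lt.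
have [q1 [q1_ge0 dq1 hq1]] := approx_from_below c_ge0 p1_ge0 p1A ep_gt0.
have [q2 [q2_ge0 dq2 hq2]] := approx_from_below c_ge0 p2_ge0 p2B ep_gt0.
have := Hq _ _ q1_ge0 q2_ge0 hq1 hq2; rewrite lee_fin leNgt => /negP; apply.
by apply: (Hep (q1, q2)) => //; split; rewrite -ball_normE.
Qed.

Lemma Iint_ub {d} {T : measurableType d} pm (m : set T -> \bar R) h t : 0 < t ->
  pm t (m [set x | t <= h x]) <= Iint pm m h.
Proof. by move=> t0; apply: ereal_sup_ubound; exists t. Qed.

Lemma lt_Iint {d} {T : measurableType d} pm (m : set T -> \bar R) h y :
  y < Iint pm m h -> exists2 t, 0 < t & y < pm t (m [set x | t <= h x]).
Proof. by move=> /ereal_sup_gt[_ [t t0 <-] yt]; exists t. Qed.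

End ExtendedOperators.

Section Measurability.
Context {d : measure_display} {T : measurableType d} {R : realType}.
Implicit Types (f g h : T -> R).

Lemma measurable_superlevel h a : measurable_fun setT h ->
  measurable [set x | a <= h x].
Proof.
by move=> mh; rewrite -preimage_itvcy -[_ @^-1` _]setTI; exact: mh.
Qed.

Lemma measurable_strict_superlevel h a : measurable_fun setT h ->
  measurable [set x | a < h x].
Proof.
by move=> mh; rewrite -preimage_itvoy -[_ @^-1` _]setTI; exact: mh.
Qed.

Lemma measurable_level h a : measurable_fun setT h ->
  measurable [set x | h x = a].
Proof.
by move=> mh; have := mh measurableT _ (measurable_set1 a); rewrite setTI.
Qed.

Section Comonotone.
Variables f g : T -> R.
Hypothesis co : forall x y, 0 <= (f x - f y) * (g x - g y).

Lemma comonotone_superlevel_nested a b :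
  [set x | a <= f x] `<=` [set x | b <= g x] \/
  [set x | b <= g x] `<=` [set x | a <= f x].
Proof.
have [|nAB] := pselect ([set x | a <= f x] `<=` [set x | b <= g x]).
  by left.
right.
move=> y /= gy; rewrite leNgt; apply/negP => fya.
apply: nAB => x /= fx; rewrite leNgt; apply/negP => gxb.
by have := co x y; nra.
Qed.

Hypotheses (mf : measurable_fun setT f) (mg : measurable_fun setT g).
Hypotheses (f0 : forall x, 0 <= f x) (g0 : forall x, 0 <= g x).

(* An up-set for the product order of (f, g) is, below its infima a0 and b0,
   the union of two strict superlevel sets and of a piece of {f = a0, g = b0}
   which is either empty or the whole of it. *)
Lemma measurable_comonotone_upset (P : set T) :
  (forall x y, P x -> f x <= f y -> g x <= g y -> P y) -> measurable P.
Proof.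
move=> Pup; have [->|/set0P[x0 Px0]] := eqVneq P set0; first exact: measurable0.
pose a0 := inf (f @` P); pose b0 := inf (g @` P).
have Pf x : P x -> a0 <= f x.
  by move=> Px; apply: ge_inf; [exists 0 => _ [y _ <-]|exists x].
have Pg x : P x -> b0 <= g x.
  by move=> Px; apply: ge_inf; [exists 0 => _ [y _ <-]|exists x].
have Pfgt y : a0 < f y -> P y.
  move=> /(inf_lt (ex_intro _ (f x0) (ex_intro2 _ _ x0 Px0 erefl))).
  move=> [_ [x Px <-] fxy]; apply: (Pup x y Px (ltW fxy)).
  by have := co x y; nra.
have Pggt y : b0 < g y -> P y.
  move=> /(inf_lt (ex_intro _ (g x0) (ex_intro2 _ _ x0 Px0 erefl))).
  move=> [_ [x Px <-] gxy]; apply: (Pup x y Px _ (ltW gxy)).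
  by have := co x y; nra.
pose E := [set x | f x = a0] `&` [set x | g x = b0].
have -> : P = [set x | a0 < f x] `|` [set x | b0 < g x] `|` (P `&` E).
  apply/seteqP; split=> [x Px|x [[/Pfgt|/Pggt]|[]]] //.
  move: (Pf x Px) (Pg x Px); rewrite !le_eqVlt.
  by case/predU1P=> [fx|fx]; case/predU1P=> [gx|gx];
    [right|left; right|left; left|left; left].
apply: measurableU.
  by apply: measurableU; exact: measurable_strict_superlevel.
have [[z [Pz [fz gz]]]|nz] := pselect (exists z, P z /\ E z).
  rewrite setIidr; first by apply: measurableI; exact: measurable_level.
  by move=> x [fx gx]; apply: (Pup z) => //=; rewrite ?fz ?fx ?gz ?gx.
suff -> : P `&` E = set0 by exact: measurable0.
by apply/seteqP; split => // x PEx; apply: nz; exists x.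
Qed.

End Comonotone.
End Measurability.

Section PseudoMultIntegral.
Context {d : measure_display} {T : measurableType d} {R : realType}.
Local Open Scope ereal_scope.
Variables (pm : \bar R -> \bar R -> \bar R) (e : \bar R) (m : set T -> \bar R).
Hypotheses (pmH : is_pseudo_mult pm e) (mH : is_monotone_measure m).

Let pm_set0 t : 0 <= t -> pm t (m set0) = 0.
Proof. by have [_ _ pm0 _ _] := pmH; have [-> _ _ _] := mH; case/pm0. Qed.

Let superlevel_fin (h : T -> R) (t : R) :
  [set x | t%:E <= (h x)%:E] = [set x | (t <= h x)%R].
Proof. by apply/seteqP; split => x /=; rewrite lee_fin. Qed.

Lemma Iint_ge0 (h : T -> R) : 0 <= Iint pm m (fun x => (h x)%:E).
Proof.
apply: le_trans (Iint_ub pm m _ (ltry 0%R)).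
rewrite (_ : [set x | _ <= _] = set0) ?pm_set0 //.
by apply/seteqP; split => x //=; rewrite leNgt ltey.
Qed.

Lemma le_Iint (h : T -> R) (t : R) (C : set T) : (0 <= t)%R ->
  measurable C -> measurable [set x | (t <= h x)%R] ->
  C `<=` [set x | (t <= h x)%R] ->
  pm t%:E (m C) <= Iint pm m (fun x => (h x)%:E).
Proof.
have [_ pm_homo pm0 _ _] := pmH; have [_ _ m_ge0 m_homo] := mH.
rewrite le_eqVlt => /predU1P[<- mC _ _|t_gt0 mC mS CS].
  by have [-> _] := pm0 _ (m_ge0 _ mC); exact: Iint_ge0.
apply: le_trans (Iint_ub pm m _ (t_gt0 : 0 < t%:E)); rewrite superlevel_fin.
by apply: pm_homo; rewrite ?lee_fin ?(ltW t_gt0) ?m_ge0 ?m_homo.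
Qed.

Hypothesis pm_mT : forall a, 0 <= a -> pm a (m setT) <= a.

Section Superlevel.
Variables (U : R -> R) (f : T -> R).
Hypotheses (mf : measurable_fun setT f) (f0 : forall x, (0 <= f x)%R).
Hypothesis hU : cont_strict_incr U.
Local Notation IUf := (Iint pm m (fun x => (U (f x))%:E)).

(* Since U is a continuous bijection onto [U 0, sup U), the superlevel sets
   of U o f are superlevel sets {a <= f} of f, at the level U a. *)
Lemma lt_Iint_superlevel x0 : (0 <= x0)%R ->
  (U x0)%:E < IUf ->
  exists a, (x0 < a)%R /\ (U x0)%:E < pm (U a)%:E (m [set x | (a <= f x)%R]).
Proof.
move=> x0_ge0 /lt_Iint[t t_gt0 Ut].
have Ux0_ge0 : 0 <= (U x0)%:E by rewrite lee_fin csi_ge0.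
case: t t_gt0 Ut => [r| |] // r_gt0; last first.
  rewrite (_ : [set x | _ <= _] = set0) ?pm_set0 // ?ltNge ?Ux0_ge0 //.
  by apply/seteqP; split => x //=; rewrite leNgt ltey.
rewrite superlevel_fin => Ut; have r_ge0 := ltW r_gt0.
have Ur : (U 0 <= r)%R.
  rewrite leNgt; apply/negP => /ltW rU0; move: Ut.
  rewrite (_ : [set x | (_ <= _)%R] = setT); last first.
    apply/seteqP; split => // x _ /=.
    by apply: le_trans rU0 _; rewrite csi_leE.
  apply/negP; rewrite -leNgt; apply: le_trans (pm_mT r_ge0) _.
  by rewrite lee_fin; apply: le_trans rU0 _; rewrite csi_leE.
have [z rz] : exists z, (r <= U (f z))%R.
  apply/not_existsP => nz; move: Ut.
  rewrite (_ : [set x | (_ <= _)%R] = set0) ?pm_set0 ?ltNge ?Ux0_ge0 //.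
  by apply/seteqP; split => // x /= rx; apply: (nz x).
have [a a_ge0 Uar] := csi_ivt hU (f0 z) (introT andP (conj Ur rz)).
have Aeq : [set x | (U a <= U (f x))%R] = [set x | (a <= f x)%R].
  by apply/seteqP; split => x /=; rewrite csi_leE.
rewrite -Uar Aeq in Ut; exists a; split => //.
rewrite -(csi_ltE hU) // -lte_fin.
have [_ pm_homo _ _ _] := pmH; have [_ _ m_ge0 m_homo] := mH.
have mA := measurable_superlevel a mf.
apply: (lt_le_trans Ut); apply: le_trans (pm_mT _) => //.
  by apply: pm_homo; rewrite ?m_ge0 ?m_homo // lee_fin csi_ge0.
by rewrite lee_fin csi_ge0.
Qed.

Lemma psiE_Uinv_Iint_approx (psi : R -> R) (q : R) : cont_strict_incr psi ->
  (q <= psi 0)%R \/ q%:E < psiE psi (Uinv U IUf) ->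
  exists a, [/\ (0 <= a)%R, (q <= psi a)%R &
     q%:E <= psiE psi (Uinv U (pm (U a)%:E (m [set x | (a <= f x)%R])))].
Proof.
move=> hpsi.
have at0 : (q <= psi 0)%R -> exists a, [/\ (0 <= a)%R, (q <= psi a)%R &
    q%:E <= psiE psi (Uinv U (pm (U a)%:E (m [set x | (a <= f x)%R])))].
  move=> q_le; exists 0%R; split => //.
  by apply: le_trans (psiE_ub _ (lexx 0%R) (Uinv_ge0 _ _)); rewrite lee_fin.
case=> [/at0//|/lt_psiE[x1 [x1_ge0 x1_le q_lt]]].
have [x1_eq0|x1_gt0] := eqVneq x1 0%R; first by apply: at0; rewrite -x1_eq0 ltW.
have {x1_gt0} x1_gt0 : (0 < x1)%R by rewrite lt_neqAle eq_sym x1_gt0.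
have [x0 [x0_ge0 x0_lt q_lt0]] := csi_gt_left hpsi x1_gt0 q_lt.
have /lt_Uinv[// | x' x0_lt' Ux'] : x0%:E < Uinv U IUf.
  by apply: lt_le_trans x1_le; rewrite lte_fin.
have /lt_Iint_superlevel[// | a [x0_lt_a Ua]] : (U x0)%:E < IUf.
  apply: lt_le_trans Ux'; rewrite lte_fin csi_ltE //.
  exact: le_trans (ltW x0_lt').
have a_ge0 : (0 <= a)%R by apply: le_trans (ltW x0_lt_a).
have psi_x0a : (psi x0 <= psi a)%R by rewrite csi_leE // ltW.
exists a; split => //; first by apply: le_trans psi_x0a; exact: ltW.
apply: le_trans (psiE_ub _ x0_ge0 (Uinv_ub x0_ge0 (ltW Ua))).
by rewrite lee_fin ltW.
Qed.

End Superlevel.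

Section ComonotoneIntegrands.
Variables (f g : T -> R) (U0 U1 U2 psi : R -> R) (star : R -> R -> R).
Hypotheses (mf : measurable_fun setT f) (mg : measurable_fun setT g).
Hypotheses (f0 : forall x, (0 <= f x)%R) (g0 : forall x, (0 <= g x)%R).
Hypothesis co : forall x y, (0 <= (f x - f y) * (g x - g y))%R.
Hypotheses (hU0 : cont_strict_incr U0) (hpsi : cont_strict_incr psi).
Hypothesis star_ge0 : forall a b, (0 <= a)%R -> (0 <= b)%R -> (0 <= star a b)%R.
Hypothesis star_homo : forall a a' b b', (0 <= a)%R -> (a <= a')%R ->
  (0 <= b)%R -> (b <= b')%R -> (star a b <= star a' b')%R.
Hypothesis hyp : forall (a b : R) (c : \bar R),
  (0 <= a)%R -> (0 <= b)%R -> 0 <= c ->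
  maxe (starE star (psiE psi (Uinv U1 (pm (U1 a)%:E c))) (psi b)%:E)
       (starE star (psi a)%:E (psiE psi (Uinv U2 (pm (U2 b)%:E c))))
  <= Uinv U0 (pm (U0 (star (psi a) (psi b)))%:E c).
Local Notation I0 :=
  (Iint pm m (fun x => (U0 (star (psi (f x)) (psi (g x))))%:E)).

Let U0_star_psi_homo a b a' b' : (0 <= a)%R -> (0 <= b)%R ->
  (a <= a')%R -> (b <= b')%R ->
  (U0 (star (psi a) (psi b)) <= U0 (star (psi a') (psi b')))%R.
Proof.
move=> a0 b0 aa' bb'; have a'0 := le_trans a0 aa'; have b'0 := le_trans b0 bb'.
rewrite csi_leE ?star_ge0 ?csi_ge0 //.
by apply: star_homo; rewrite ?csi_ge0 ?csi_leE.
Qed.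

Lemma Uinv_pm_le_Iint a b (C : set T) : (0 <= a)%R -> (0 <= b)%R ->
  measurable C ->
  C `<=` [set x | (a <= f x)%R /\ (b <= g x)%R] ->
  Uinv U0 (pm (U0 (star (psi a) (psi b)))%:E (m C)) <= Uinv U0 I0.
Proof.
move=> a0 b0 mC CS; apply: le_Uinv; apply: le_Iint mC _ _.
- by rewrite csi_ge0 ?star_ge0 ?csi_ge0.
- apply: (measurable_comonotone_upset co mf mg f0 g0) => x y /= hx fxy gxy.
  exact: le_trans hx (U0_star_psi_homo (f0 x) (g0 x) fxy gxy).
- by move=> x /CS[fx gx]; exact: U0_star_psi_homo.
Qed.

Lemma star_superlevel_le a b q1 q2 : (0 <= a)%R -> (0 <= b)%R ->
  (0 <= q1)%R -> (0 <= q2)%R -> (q1 <= psi a)%R -> (q2 <= psi b)%R ->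
  q1%:E <= psiE psi (Uinv U1 (pm (U1 a)%:E (m [set x | (a <= f x)%R]))) ->
  q2%:E <= psiE psi (Uinv U2 (pm (U2 b)%:E (m [set x | (b <= g x)%R]))) ->
  (star q1 q2)%:E <= Uinv U0 I0.
Proof.
move=> a0 b0 q1_ge0 q2_ge0 q1a q2b q1A q2B; have [_ _ m_ge0 _] := mH.
have mA := measurable_superlevel a mf; have mB := measurable_superlevel b mg.
have [AB|BA] := comonotone_superlevel_nested co a b.
- apply: le_trans (Uinv_pm_le_Iint a0 b0 mA _); last first.
    by move=> x Ax; split => //; exact: AB.
  apply: le_trans (hyp a0 b0 (m_ge0 _ mA)); rewrite le_max; apply/orP; left.
  by apply: starE_ub; rewrite ?lee_fin.
- apply: le_trans (Uinv_pm_le_Iint a0 b0 mB _); last first.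
    by move=> x Bx; split => //; exact: BA.
  apply: le_trans (hyp a0 b0 (m_ge0 _ mB)); rewrite le_max; apply/orP; right.
  by apply: starE_ub; rewrite ?lee_fin.
Qed.

End ComonotoneIntegrands.
End PseudoMultIntegral.

Local Open Scope ereal_scope.

Theorem corollary3p1 (d : measure_display) (T : measurableType d) (R : realType)
  (f g : T -> R) (pm : \bar R -> \bar R -> \bar R) (e : \bar R)
  (m : set T -> \bar R) (U0 U1 U2 psi : R -> R) (star : R -> R -> R) :
  measurable_fun setT f -> measurable_fun setT g ->
  (forall x, (0 <= f x)%R) -> (forall x, (0 <= g x)%R) ->
  (forall x y, (0 <= (f x - f y) * (g x - g y))%R) ->
  is_pseudo_mult pm e ->
  is_monotone_measure m ->
  (forall a : \bar R, 0 <= a -> pm a (m setT) <= a) ->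
  cont_strict_incr U0 -> cont_strict_incr U1 -> cont_strict_incr U2 ->
  Iint pm m (fun x => (U1 (f x))%:E) < +oo ->
  Iint pm m (fun x => (U2 (g x))%:E) < +oo ->
  (forall a b, (0 <= a)%R -> (0 <= b)%R -> (0 <= star a b)%R) ->
  {within [set p : R * R | (0 <= p.1)%R /\ (0 <= p.2)%R],
     continuous (fun p : R * R => star p.1 p.2)} ->
  (forall a a' b b', (0 <= a)%R -> (a <= a')%R -> (0 <= b)%R -> (b <= b')%R ->
     (star a b <= star a' b')%R) ->
  cont_strict_incr psi ->
  (forall (a b : R) (c : \bar R), (0 <= a)%R -> (0 <= b)%R -> 0 <= c ->
     maxe (starE star (psiE psi (Uinv U1 (pm (U1 a)%:E c))) (psi b)%:E)
          (starE star (psi a)%:E (psiE psi (Uinv U2 (pm (U2 b)%:E c))))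
     <= Uinv U0 (pm (U0 (star (psi a) (psi b)))%:E c)) ->
  starE star (psiE psi (Uinv U1 (Iint pm m (fun x => (U1 (f x))%:E))))
             (psiE psi (Uinv U2 (Iint pm m (fun x => (U2 (g x))%:E))))
  <= Uinv U0 (Iint pm m (fun x => (U0 (star (psi (f x)) (psi (g x))))%:E)).
Proof.
move=> mf mg f0 g0 co pmH mH pm_mT hU0 hU1 hU2 _ _ star_ge0 star_cont star_homo
  hpsi hyp.
apply: starE_le_approx (csi_ge0 hpsi (lexx 0%R)) star_cont _.
move=> q1 q2 q1_ge0 q2_ge0 hq1 hq2.
have [a [a_ge0 q1a q1A]] :=
  psiE_Uinv_Iint_approx pmH mH pm_mT mf f0 hU1 hpsi hq1.
have [b [b_ge0 q2b q2B]] :=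
  psiE_Uinv_Iint_approx pmH mH pm_mT mg g0 hU2 hpsi hq2.
exact: (star_superlevel_le pmH mH mf mg f0 g0 co hU0 hpsi star_ge0 star_homo hyp
  a_ge0 b_ge0 q1_ge0 q2_ge0 q1a q2b q1A q2B).
Qed.
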